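(* Let $n\ge2$, $N,M\ge1$, let $\Lambda$ be a positive definite diagonal $n\times n$ matrix, let $\overline Q^1_0,\dots,\overline Q^M_0\in SO(n)$, and let $\phi:\mathbb{R}^{n\times n}\to[0,\infty)$ be smooth. Consider the problem of minimizing $$\hat V(U_0,\dots,U_{N-1})=\sum_{k=0}^{N-1}\operatorname{trace}(\Lambda U_k)+\sum_{a=1}^M\phi(Q^a_N)$$ over $U_0,\dots,U_{N-1}\in SO(n)$, where $Q^a_0=\overline Q^a_0$ and $Q^a_{k+1}=Q^a_kU_k$ for $k=0,\dots,N-1$, $a=1,\dots,M$. If $(U_0,\dots,U_{N-1})$ is a (local) minimizer, then there exist real $n\times n$ matrices $P^a_k$ ($a=1,\dots,M$, $k=0,\dots,N$) such that for all $a$ and $k=0,\dots,N-1$: $$Q^a_{k+1}=Q^a_kU_k,\qquad P^a_{k+1}=P^a_kU_k,\qquad U_k\Lambda-\Lambda U_k^T=\sum_{a=1}^M\big((Q^a_k)^TP^a_k-(P^a_k)^TQ^a_k\big),$$ and $P^a_N=\nabla\phi(Q^a_N)$ for all $a$.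
   Context: $SO(n)$ is the group of real orthogonal $n\times n$ matrices of determinant $1$; $A^T$ is the transpose. $\nabla\phi(A)$ is the Euclidean (Frobenius) gradient of $\phi$ at $A\in\mathbb{R}^{n\times n}$, i.e. the matrix with entries $\partial\phi/\partial A_{ij}$, so that $\frac{d}{d\epsilon}\big|_{0}\phi(A+\epsilon B)=\operatorname{trace}(\nabla\phi(A)^TB)$. *)

From HB Require Import structures.
From mathcomp Require Import all_boot all_order all_algebra.
From mathcomp Require Import all_classical all_reals all_analysis.
Set Implicit Arguments. Unset Strict Implicit. Unset Printing Implicit Defensive.
Import Order.TTheory GRing.Theory Num.Theory.
Import numFieldNormedType.Exports.
Local Open Scope ring_scope.

Definition SOmx (R : realType) (n : nat) : pred 'M[R]_n :=
  [pred A : 'M[R]_n | (A^T *m A == 1%:M) && (\det A == 1)].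

Arguments SOmx : clear implicits.

Fixpoint iter_dir (R : realType) (n : nat) (vs : seq 'M[R]_n)
    (f : 'M[R]_n -> R) : 'M[R]_n -> R :=
  match vs with
  | [::] => f
  | v :: vs' => fun x => 'D_v (iter_dir vs' f) x
  end.

Definition smooth_fun (R : realType) (n : nat) (f : 'M[R]_n -> R) : Prop :=
  forall vs : seq 'M[R]_n,
    continuous (iter_dir vs f) /\
    forall (v x : 'M[R]_n), derivable (iter_dir vs f) x v.

Definition grad (R : realType) (n : nat) (phi : 'M[R]_n -> R) (A : 'M[R]_n)
  : 'M[R]_n := \matrix_(i, j) 'D_(delta_mx i j) phi A.

(* controls extended by the identity outside 0..N-1 *)
Definition ctrl (R : realType) (n N : nat) (U : 'I_N -> 'M[R]_n) (k : nat)
  : 'M[R]_n := oapp U 1%:M (insub k).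

Fixpoint traj (R : realType) (n N : nat) (Q0 : 'M[R]_n)
    (U : 'I_N -> 'M[R]_n) (k : nat) : 'M[R]_n :=
  match k with
  | 0 => Q0
  | k'.+1 => traj Q0 U k' *m ctrl U k'
  end.

Definition Vhat (R : realType) (n N M : nat) (Lam : 'M[R]_n)
    (phi : 'M[R]_n -> R) (Q0 : 'I_M -> 'M[R]_n) (U : 'I_N -> 'M[R]_n) : R :=
  \sum_(k < N) \tr (Lam *m U k) + \sum_(a < M) phi (traj (Q0 a) U N).

(* local minimizer over SO(n)^N (neighbourhood w.r.t. the matrix sup norm) *)
Definition local_min_SO (R : realType) (n N M : nat) (Lam : 'M[R]_n)
    (phi : 'M[R]_n -> R) (Q0 : 'I_M -> 'M[R]_n) (U : 'I_N -> 'M[R]_n) : Prop :=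
  (forall k, U k \in SOmx R n) /\
  exists2 eps : R, 0 < eps &
    forall W : 'I_N -> 'M[R]_n,
      (forall k, W k \in SOmx R n) ->
      (forall k, `|W k - U k| < eps) ->
      Vhat Lam phi Q0 U <= Vhat Lam phi Q0 W.

(* Fix a step k and let P^a_m := grad phi (Q^a_N) (U_m ... U_(N-1))^T be the costate,
   propagated backward from the terminal gradient. Replacing U_k by U_k T, with T a
   rotation in the (i, j) coordinate plane, keeps every control in SO(n), and to first
   order changes the cost by tr (X_k (E_ij - E_ji)), where
   X_k = Lam U_k + sum_a (P^a_(k+1))^T Q^a_(k+1). Minimality makes this nonnegative for
   both orders of (i, j), hence X_k is symmetric; conjugating X_k = X_k^T by U_k gives
   the adjoint equation. *)

From HB Require Import structures.
From mathcomp Require Import all_boot all_order all_algebra.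
From mathcomp Require Import all_classical all_reals all_analysis.
From mathcomp Require Import ring lra.
Import Order.TTheory GRing.Theory Num.Theory.
Import numFieldNormedType.Exports.
Local Open Scope ring_scope.
Set Implicit Arguments. Unset Strict Implicit. Unset Printing Implicit Defensive.

Section DirectionalDerivative.
Variables (R : realType) (V : normedModType R).
Implicit Types (f : V -> R) (x v w : V).

Lemma derive_of_linear_approx f x v (L : R) :
  (forall e : R, 0 < e -> exists2 d : R, 0 < d & forall t : R, `|t| < d ->
     `|f (x + t *: v) - f x - t * L| <= e * `|t|) -> 'D_v f x = L.
Proof.
move=> H; rewrite /derive; apply: cvg_lim => //.
apply/cvgrPdist_le => e e0; have [d d0 hd] := H e e0.
rewrite near_withinE; apply/nbhs_normP; exists d => //= t /= ht tn0.
rewrite sub0r normrN in ht.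
have := hd t ht; rewrite /= [t *: v + x]addrC; set X := (f _ - f x).
have -> : L - t^-1 *: X = - t^-1 * (- (t * L) + X).
  rewrite -[t^-1 *: X]/(t^-1 * X); by field.
rewrite normrM normrN normfV addrC => h.
by rewrite mulrC ler_pdivrMr ?normr_gt0 // mulrC.
Qed.

Lemma is_derive_line f x v (s : R) : derivable f (x + s *: v) v ->
  is_derive s 1 (fun t : R => f (x + t *: v)) ('D_v f (x + s *: v)).
Proof.
move=> dfv.
have E : (fun h : R => h^-1 *: (((fun t : R => f (x + t *: v)) \o shift s) (h *: 1)
          - f (x + s *: v)))
       = (fun h : R => h^-1 *: ((f \o shift (x + s *: v)) (h *: v) - f (x + s *: v))).
  apply/funext => h /=; congr (_ *: (f _ - _)).
  by rewrite scalerDl -[h *: 1]/(h * 1) mulr1 addrCA.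
by split; [rewrite /derivable E | rewrite /derive E].
Qed.

Lemma MVT_line f x v (u : R) : (forall y, derivable f y v) ->
  exists2 c : R, `|c| <= `|u| & f (x + u *: v) - f x = u * 'D_v f (x + c *: v).
Proof.
move=> dfv; set g := fun t : R => f (x + t *: v).
have gd t : is_derive t (1 : R) g ('D_v f (x + t *: v)) by exact: is_derive_line.
have gc : continuous g.
  by move=> t; apply: differentiable_continuous; apply/derivable1_diffP; have [] := gd t.
have g0 : g 0 = f x by rewrite /g scale0r addr0.
case: (leP 0 u) => hu.
- have [c hc E] := MVT_segment hu (fun t _ => gd t) (continuous_subspaceT gc).
  exists c; last by rewrite -g0 /g E subr0 mulrC.
  move: hc; rewrite in_itv /= => /andP[c0 cu].
  by rewrite !ger0_norm // (le_trans c0 cu).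
- have [c hc E] := MVT_segment (ltW hu) (fun t _ => gd t) (continuous_subspaceT gc).
  exists c; last first.
    rewrite -g0; apply: (@oppr_inj R); rewrite opprB -/(g u) E.
    by rewrite sub0r mulrN mulrC.
  move: hc; rewrite in_itv /= => /andP[uc c0].
  by rewrite !ler0_norm ?lerN2 // (le_trans (ltW hu)).
Qed.

Lemma linear_approx2 f x v w :
  (forall y z, derivable f y z) ->
  {for x, continuous ('D_v f)} -> {for x, continuous ('D_w f)} ->
  forall e : R, 0 < e -> exists2 d : R, 0 < d & forall s u : R, `|s| < d -> `|u| < d ->
  `|f (x + s *: v + u *: w) - f x - s * 'D_v f x - u * 'D_w f x| <= e * (`|s| + `|u|).
Proof.
move=> df /cvgrPdist_lt cv /cvgrPdist_lt cw e e0.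
have /nbhs_normP[d1 d10 h1] := cv e e0.
have /nbhs_normP[d2 d20 h2] := cw e e0.
set d := Num.min d1 d2; set K := `|v| + `|w| + 1.
have K0 : 0 < K by rewrite /K ltr_wpDl // addr_ge0.
have d0 : 0 < d by rewrite lt_min d10 d20.
have near_x a b : `|a| < d / K -> `|b| < d / K -> `|a *: v + b *: w| < d.
  move=> ha hb; apply: (le_lt_trans (ler_normD _ _)); rewrite !normrZ.
  have hK : d = d / K * K by rewrite divfK // gt_eqF.
  rewrite [X in _ < X]hK /K mulrDr mulr1 mulrDr.
  have : `|a| * `|v| <= d / K * `|v| by rewrite ler_wpM2r // ltW.
  have : `|b| * `|w| <= d / K * `|w| by rewrite ler_wpM2r // ltW.
  have : 0 < d / K by rewrite divr_gt0.
  lra.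
exists (d / K); first by rewrite divr_gt0.
move=> s u hs hu.
have [c hc /eqP] := MVT_line (x + s *: v) u (df^~ w).
rewrite subr_eq => /eqP ->.
have [c' hc' /eqP] := MVT_line x s (df^~ v).
rewrite subr_eq => /eqP ->.
have hDw : `|'D_w f x - 'D_w f (x + s *: v + c *: w)| < e.
  apply: h2; rewrite /= -addrA opprD addrA subrr sub0r normrN.
  apply: (lt_le_trans (near_x _ _ hs (le_lt_trans hc hu))).
  by rewrite ge_min lexx orbT.
have hDv : `|'D_v f x - 'D_v f (x + c' *: v)| < e.
  apply: h1; rewrite /= opprD addrA subrr sub0r normrN -[c' *: v]addr0 -(scale0r w).
  apply: (lt_le_trans (near_x _ _ (le_lt_trans hc' hs) _)); last by rewrite ge_min lexx.
  by rewrite normr0 divr_gt0.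
rewrite distrC in hDw; rewrite distrC in hDv.
have -> : u * 'D_w f (x + s *: v + c *: w) + (s * 'D_v f (x + c' *: v) + f x) - f x
          - s * 'D_v f x - u * 'D_w f x
        = u * ('D_w f (x + s *: v + c *: w) - 'D_w f x)
          + s * ('D_v f (x + c' *: v) - 'D_v f x) by ring.
apply: (le_trans (ler_normD _ _)); rewrite !normrM.
have := normr_ge0 u; have := normr_ge0 s; nra.
Qed.

Section C1.
Variable f : V -> R.
Hypotheses (df : forall x v, derivable f x v) (cf : forall v, continuous ('D_v f)).

Lemma derive_dirD x v w : 'D_(v + w) f x = 'D_v f x + 'D_w f x.
Proof.
apply: derive_of_linear_approx => e e0.
have [d d0 hd] := linear_approx2 df (@cf v x) (@cf w x) (divr_gt0 e0 (ltr0Sn R 1)).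
exists d => // t ht; have := hd t t ht ht.
rewrite scalerDr addrA => h.
have -> : f (x + t *: v + t *: w) - f x - t * ('D_v f x + 'D_w f x)
  = f (x + t *: v + t *: w) - f x - t * 'D_v f x - t * 'D_w f x by ring.
by apply: (le_trans h); rewrite le_eqVlt; apply/orP; left; apply/eqP; field.
Qed.

Lemma derive_dirZ x (c : R) v : 'D_(c *: v) f x = c * 'D_v f x.
Proof.
apply: derive_of_linear_approx => e e0.
have c1 : 0 < `|c| + 1 by rewrite ltr_wpDl.
have [d d0 hd] := linear_approx2 df (@cf v x) (@cf v x) (divr_gt0 e0 c1).
exists (d / (`|c| + 1)); first by rewrite divr_gt0.
move=> t ht; have hct : `|c * t| < d.
  rewrite normrM; apply: (le_lt_trans (y := (`|c| + 1) * `|t|)).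
    by rewrite ler_wpM2r // lerDl.
  by rewrite mulrC -ltr_pdivlMr.
have := hd (c * t) 0 hct; rewrite normr0 => /(_ d0).
rewrite scale0r addr0 mul0r subr0 scalerA [t * c]mulrC mulrA [t * c]mulrC.
move=> /le_trans; apply; rewrite addr0 normrM mulrA ler_wpM2r //.
by rewrite mulrAC ler_pdivrMr // ler_wpM2l ?(ltW e0) // lerDl.
Qed.

Lemma derive_dir_sum (I : Type) (r : seq I) (P : pred I) (F : I -> V) x :
  'D_(\sum_(i <- r | P i) F i) f x = \sum_(i <- r | P i) 'D_(F i) f x.
Proof. exact: (big_morph (fun v => 'D_v f x) (derive_dirD x) (derive0 f x)). Qed.

End C1.
End DirectionalDerivative.

Lemma derive_dir_grad (R : realType) n (f : 'M[R]_n -> R) :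
  (forall x v, derivable f x v) -> (forall v, continuous ('D_v f)) ->
  forall A B, 'D_B f A = \tr ((grad f A)^T *m B).
Proof.
move=> df cf A B; rewrite {1}(matrix_sum_delta B) (derive_dir_sum df cf) /mxtrace.
under eq_bigr => i _ do rewrite (derive_dir_sum df cf).
rewrite exchange_big; apply: eq_bigr => j _; rewrite mxE; apply: eq_bigr => i _.
by rewrite (derive_dirZ df cf) !mxE mulrC.
Qed.

Section Trajectory.
Variables (R : realType) (n N : nat).
Implicit Types (U : 'I_N -> 'M[R]_n) (X : 'M[R]_n).

Fixpoint ctrl_prod U (p m : nat) : 'M[R]_n :=
  if m is m'.+1 then ctrl_prod U p m' *m ctrl U (p + m') else 1%:M.

Lemma ctrl_prodSl U p m : ctrl_prod U p m.+1 = ctrl U p *m ctrl_prod U p.+1 m.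
Proof.
elim: m => [|m IH]; first by rewrite /= addn0 mulmx1 mul1mx.
rewrite -[LHS]/(ctrl_prod U p m.+1 *m ctrl U (p + m.+1)) IH -mulmxA.
by rewrite -addSnnS.
Qed.

Lemma eq_ctrl_prod U U' p m : (forall j, (p <= j)%N -> ctrl U j = ctrl U' j) ->
  ctrl_prod U p m = ctrl_prod U' p m.
Proof. by move=> eqU; elim: m => //= m ->; rewrite eqU // leq_addr. Qed.

Lemma ctrl_ord U (k : 'I_N) : ctrl U k = U k.
Proof. by rewrite /ctrl valK. Qed.

Lemma traj_ordS Q0 U (k : 'I_N) : traj Q0 U k.+1 = traj Q0 U k *m U k.
Proof. by rewrite /= ctrl_ord. Qed.

Lemma traj_addn Q0 U p m : traj Q0 U (p + m) = traj Q0 U p *m ctrl_prod U p m.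
Proof. by elim: m => [|m IH]; rewrite ?addn0 ?mulmx1 // addnS /= IH mulmxA. Qed.

Lemma eq_traj Q0 U U' p : (forall j, (j < p)%N -> ctrl U j = ctrl U' j) ->
  traj Q0 U p = traj Q0 U' p.
Proof.
by elim: p => //= p IH eqU; rewrite IH ?eqU // => j /ltnW; exact: eqU.
Qed.

Lemma traj_N_split Q0 U (k : 'I_N) :
  traj Q0 U N = traj Q0 U k.+1 *m ctrl_prod U k.+1 (N - k.+1).
Proof. by rewrite -traj_addn subnKC. Qed.

Definition perturb_ctrl U (k : 'I_N) X : 'I_N -> 'M[R]_n :=
  fun l => if l == k then U k *m X else U l.

Lemma ctrl_perturb U k X j :
  ctrl (perturb_ctrl U k X) j = if j == val k then U k *m X else ctrl U j.
Proof.
rewrite /ctrl; case: insubP => [l _ <-|/negbTE hj] /=; first by [].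
by case: eqP => // ej; rewrite ej ltn_ord in hj.
Qed.

Lemma traj_perturb Q0 U (k : 'I_N) X :
  traj Q0 (perturb_ctrl U k X) N = traj Q0 U k.+1 *m X *m ctrl_prod U k.+1 (N - k.+1).
Proof.
rewrite (traj_N_split _ _ k) /= ctrl_perturb eqxx mulmxA /=.
rewrite (@eq_traj _ _ U) => [|j hj]; last by rewrite ctrl_perturb (ltn_eqF hj).
rewrite -traj_ordS.
congr (_ *m _); apply: eq_ctrl_prod => j hj; rewrite ctrl_perturb.
by case: eqP => // ej; rewrite ej ltnn in hj.
Qed.

Definition costate (PN : 'M[R]_n) U (m : nat) : 'M[R]_n :=
  PN *m (ctrl_prod U m (N - m))^T.

Lemma costate_N PN U : costate PN U N = PN.
Proof. by rewrite /costate subnn trmx1 mulmx1. Qed.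

Lemma costate_ordS PN U (k : 'I_N) : (U k)^T *m U k = 1%:M ->
  costate PN U k.+1 = costate PN U k *m U k.
Proof.
move=> orthU; rewrite /costate -[(N - k)%N](subnSK (ltn_ord k)) ctrl_prodSl ctrl_ord trmx_mul.
by rewrite -!mulmxA orthU mulmx1.
Qed.

End Trajectory.

Lemma mxtrace_mulmx_delta (R : comPzRingType) n (X : 'M[R]_n) i j :
  \tr (X *m delta_mx i j) = X j i.
Proof.
rewrite /mxtrace (bigD1 j) //= big1 ?addr0 => [|p hp].
  rewrite mxE (bigD1 i) //= big1 ?addr0 => [|q hq]; first by rewrite mxE !eqxx mulr1.
  by rewrite mxE (negPf hq) mulr0.
by rewrite mxE big1 // => q _; rewrite mxE (negPf hp) andbF mulr0.
Qed.

Section PlaneRotation.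
Variables (R : comPzRingType) (n : nat) (i j : 'I_n).
Hypothesis neq_ij : i != j.

Definition plane_skew : 'M[R]_n := delta_mx i j - delta_mx j i.
Definition plane_proj : 'M[R]_n := delta_mx i i + delta_mx j j.
(* [plane_mx (sin t) (cos t - 1)] is the rotation by [t] in the (i, j) plane. *)
Definition plane_mx (a c : R) : 'M[R]_n := 1%:M + a *: plane_skew + c *: plane_proj.

Lemma plane_skew_tr : plane_skew^T = - plane_skew.
Proof. by rewrite /plane_skew linearB /= !trmx_delta opprB. Qed.

Lemma plane_proj_tr : plane_proj^T = plane_proj.
Proof. by rewrite /plane_proj linearD /= !trmx_delta. Qed.

Let neq_ji : j != i. Proof. by rewrite eq_sym. Qed.

Lemma plane_mx_mul (a b c d : R) : plane_mx a c *m plane_mx b d =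
  plane_mx (a + b + a * d + c * b) (c + d - a * b + c * d).
Proof.
have SS : plane_skew *m plane_skew = - plane_proj.
  rewrite !mulmxBl !mulmxBr !mul_delta_mx_cond !eqxx (negPf neq_ij) (negPf neq_ji).
  by rewrite !mulr0n !mulr1n sub0r subr0 opprD addrC.
have SD : plane_skew *m plane_proj = plane_skew.
  rewrite !mulmxBl !mulmxDr !mul_delta_mx_cond !eqxx (negPf neq_ij) (negPf neq_ji).
  by rewrite !mulr0n !mulr1n addr0 add0r.
have DS : plane_proj *m plane_skew = plane_skew.
  rewrite !mulmxDl !mulmxBr !mul_delta_mx_cond !eqxx (negPf neq_ij) (negPf neq_ji).
  by rewrite !mulr0n !mulr1n !subr0 sub0r.
have DD : plane_proj *m plane_proj = plane_proj.
  rewrite !mulmxDl !mulmxDr !mul_delta_mx_cond !eqxx (negPf neq_ij) (negPf neq_ji).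
  by rewrite !mulr0n !mulr1n addr0 add0r.
rewrite /plane_mx !mulmxDl !mulmxDr !mul1mx !mulmx1 -!scalemxAl -!scalemxAr !scalerA.
rewrite SS SD DS DD; apply/matrixP => p q; rewrite !mxE; ring.
Qed.

Lemma plane_mx_tr a c : (plane_mx a c)^T = plane_mx (- a) c.
Proof.
rewrite /plane_mx linearD /= linearD /= !linearZ /= trmx1 plane_skew_tr plane_proj_tr.
by rewrite scalerN scaleNr.
Qed.

Lemma plane_mx_orth a c : (1 + c) ^+ 2 + a ^+ 2 = 1 ->
  (plane_mx a c)^T *m plane_mx a c = 1%:M.
Proof.
move=> circ; rewrite plane_mx_tr plane_mx_mul.
have -> : - a + a + - a * c + c * a = 0 by ring.
have -> : c + c - - a * a + c * c = 0.
  by rewrite -(subrr 1) -[X in _ = X - _]circ; ring.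
by rewrite /plane_mx !scale0r !addr0.
Qed.

Lemma mxtrace_plane_skew (X : 'M[R]_n) : \tr (X *m plane_skew) = X j i - X i j.
Proof. by rewrite mulmxBr raddfB /= !mxtrace_mulmx_delta. Qed.

End PlaneRotation.

Arguments plane_skew {R n} i j.
Arguments plane_proj {R n} i j.

Lemma SOmx_mul (R : realType) n (A B : 'M[R]_n) :
  A \in SOmx R n -> B \in SOmx R n -> A *m B \in SOmx R n.
Proof.
rewrite !inE => /andP[/eqP oA /eqP dA] /andP[/eqP oB /eqP dB].
by rewrite det_mulmx dA dB mulr1 eqxx andbT trmx_mul mulmxA -(mulmxA _ A^T) oA mulmx1 oB.
Qed.

(* This is the square of the rotation with [sin t = a]; squaring gives determinant [1]
   without computing it. *)
Lemma plane_mx_SO (R : realType) n (i j : 'I_n) (a : R) : i != j -> `|a| <= 1 ->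
  plane_mx i j (2 * a * Num.sqrt (1 - a ^+ 2)) (- (2 * a ^+ 2)) \in SOmx R n.
Proof.
move=> neq_ij a1; set c := Num.sqrt (1 - a ^+ 2) - 1.
have sqr_sqrt : Num.sqrt (1 - a ^+ 2) ^+ 2 = 1 - a ^+ 2.
  by rewrite sqr_sqrtr // subr_ge0 -real_normK ?num_real // expr_le1.
have circ : (1 + c) ^+ 2 + a ^+ 2 = 1 by rewrite /c [1 + _]addrC subrK sqr_sqrt subrK.
have orth := plane_mx_orth neq_ij circ.
have e1 : 2 * a * Num.sqrt (1 - a ^+ 2) = a + a + a * c + c * a by rewrite /c; ring.
have e2 : - (2 * a ^+ 2) = c + c - a * a + c * c.
  transitivity (Num.sqrt (1 - a ^+ 2) ^+ 2 - 1 - a ^+ 2); first by rewrite sqr_sqrt; ring.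
  by rewrite /c; ring.
rewrite e1 e2 -plane_mx_mul //.
have detT : \det (plane_mx i j a c) ^+ 2 = 1.
  by rewrite expr2 -{1}det_tr -det_mulmx orth det1.
rewrite inE det_mulmx -expr2 detT eqxx andbT.
by rewrite trmx_mul mulmxA -(mulmxA _ _^T) orth mulmx1 orth.
Qed.

Lemma sym_of_mxtrace_plane_skew_ge0 (R : numDomainType) n (X : 'M[R]_n) :
  (forall i j : 'I_n, i != j -> 0 <= \tr (X *m plane_skew i j)) -> X^T = X.
Proof.
move=> ge0; apply/matrixP => i j; rewrite mxE.
have [-> //|neq_ij] := eqVneq i j.
have := ge0 _ _ neq_ij; have := ge0 j i; rewrite eq_sym => /(_ neq_ij).
rewrite !mxtrace_plane_skew !subr_ge0 => h1 h2.
by apply/eqP; rewrite eq_le h1 h2.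
Qed.

(* Along [a |-> (2 a sqrt (1 - a^2), -2 a^2)] the [u]-direction only enters at second
   order, so a local minimum at [a = 0] forces the [s]-coefficient [L1] to be
   nonnegative. *)
Lemma linear_approx_min_coef_ge0 (R : realType) (F : R -> R -> R) (F0 L1 L2 t0 : R) :
  0 < t0 ->
  (forall e : R, 0 < e -> exists2 d : R, 0 < d & forall s u : R, `|s| < d -> `|u| < d ->
     `|F s u - F0 - s * L1 - u * L2| <= e * (`|s| + `|u|)) ->
  (forall a : R, 0 < a -> a < t0 ->
     F0 <= F (2 * a * Num.sqrt (1 - a ^+ 2)) (- (2 * a ^+ 2))) ->
  0 <= L1.
Proof.
move=> t00 approx Fmin; rewrite leNgt; apply/negP => L1_lt0.
set e := - L1 / 4.
have e0 : 0 < e by rewrite /e divr_gt0 // oppr_gt0.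
have [d d0 hd] := approx e e0.
set K := `|L2| + e.
have K0 : 0 < K by rewrite /K ltr_wpDl.
have K1 : 0 < 8 * K + 1 by rewrite ltr_wpDl // mulr_ge0 // ltW.
set a := Num.min (Num.min (t0 / 2) (d / 4)) (Num.min (1 / 2) (- L1 / (8 * K + 1))).
have a0 : 0 < a by rewrite /a !lt_min !divr_gt0 //= ?oppr_gt0.
have at0 : a <= t0 / 2 by rewrite /a !ge_min lexx.
have ad : a <= d / 4 by rewrite /a !ge_min lexx orbT.
have ah : a <= 1 / 2 by rewrite /a !ge_min lexx !orbT.
have aL : a * (8 * K + 1) <= - L1 by rewrite -ler_pdivlMr // /a !ge_min lexx !orbT.
set sq := Num.sqrt (1 - a ^+ 2).
have sq2 : sq ^+ 2 = 1 - a ^+ 2 by rewrite sqr_sqrtr //; nra.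
have sq0 : 0 <= sq := sqrtr_ge0 _.
have sqh : 1 / 2 <= sq by nra.
have sq1 : sq <= 1 by nra.
have a2 : a ^+ 2 <= a / 2 by rewrite expr2; nra.
have s_ge0 : 0 <= 2 * a * sq by rewrite !mulr_ge0 // ltW.
have s_le : 2 * a * sq <= 2 * a by rewrite ler_piMr // mulr_ge0 // ltW.
have a2_ge0 : 0 <= 2 * a ^+ 2 by rewrite mulr_ge0 // exprn_ge0 // ltW.
have := hd (2 * a * sq) (- (2 * a ^+ 2)).
rewrite normrN (ger0_norm s_ge0) (ger0_norm a2_ge0) => /(_ ltac:(lra) ltac:(lra)).
move=> /(le_trans (ler_norm _)) approx_a.
have Fa : F0 <= F (2 * a * sq) (- (2 * a ^+ 2)) by apply: Fmin => //; lra.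
have f1 : 2 * a * sq * L1 <= a * L1.
  have : a * L1 * (2 * sq - 1) <= 0.
    by apply: mulr_le0_ge0; [rewrite pmulr_rle0 // ltW | lra].
  lra.
have f3 : 2 * a ^+ 2 * K <= - (a * L1) / 4.
  have : a * (a * (8 * K + 1)) <= a * - L1 by rewrite ler_pM2l.
  have : 0 <= a ^+ 2 by rewrite exprn_ge0 // ltW.
  rewrite expr2; lra.
have hL2 : - (2 * a ^+ 2 * L2) <= 2 * a ^+ 2 * `|L2|.
  by rewrite -mulrN ler_wpM2l // -normrN ler_norm.
rewrite /K /e in f3; rewrite /e in approx_a.
have : 0 < - (a * L1) by rewrite oppr_gt0 pmulr_rlt0.
lra.
Qed.

Lemma finite_common_delta (R : realType) (I : finType) (P : I -> R -> Prop) :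
  (forall i d d', 0 < d' -> d' <= d -> P i d -> P i d') ->
  (forall i, exists2 d, 0 < d & P i d) -> exists2 d : R, 0 < d & forall i, P i d.
Proof.
move=> P_anti Pex.
have /choice[dd hdd] : forall i, exists d, 0 < d /\ P i d.
  by move=> i; have [d] := Pex i; exists d.
have dd0 : 0 < \big[Num.min/1]_i dd i.
  by elim/big_ind: _ => // [x y ? ?|i _]; [rewrite lt_min; apply/andP | exact: (hdd i).1].
exists (\big[Num.min/1]_i dd i) => // i.
by apply: (P_anti i (dd i)) => //; [exact: bigmin_le | exact: (hdd i).2].
Qed.

Section FirstVariation.
Variables (R : realType) (n N M : nat) (Lam : 'M[R]_n) (Q0 : 'I_M -> 'M[R]_n)
  (phi : 'M[R]_n -> R) (U : 'I_N -> 'M[R]_n) (k : 'I_N).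

Let QN a := traj (Q0 a) U N.
Let tail := ctrl_prod U k.+1 (N - k.+1).
Let dir S a := traj (Q0 a) U k.+1 *m S *m tail.

Definition perturbed_cost (S D : 'M[R]_n) (s u : R) : R :=
  Vhat Lam phi Q0 (perturb_ctrl U k (1%:M + s *: S + u *: D)).

Definition first_variation (S : 'M[R]_n) : R :=
  \tr (Lam *m (U k *m S)) + \sum_a 'D_(dir S a) phi (QN a).

Lemma perturbed_costE S D s u : perturbed_cost S D s u =
  Vhat Lam phi Q0 U + s * \tr (Lam *m (U k *m S)) + u * \tr (Lam *m (U k *m D))
  + \sum_a (phi (QN a + s *: dir S a + u *: dir D a) - phi (QN a)).
Proof.
have mulmx_pert (A : 'M[R]_n) :
    A *m (1%:M + s *: S + u *: D) = A + s *: (A *m S) + u *: (A *m D).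
  by rewrite !mulmxDr mulmx1 -!scalemxAr.
have cost l : \tr (Lam *m perturb_ctrl U k (1%:M + s *: S + u *: D) l) =
   \tr (Lam *m U l) + (if l == k then s * \tr (Lam *m (U k *m S))
        + u * \tr (Lam *m (U k *m D)) else 0).
  rewrite /perturb_ctrl; case: eqP => [->|_]; last by rewrite addr0.
  by rewrite mulmx_pert !mulmxDr -!scalemxAr !mxtraceD !mxtraceZ addrA.
have term a : traj (Q0 a) (perturb_ctrl U k (1%:M + s *: S + u *: D)) N
              = QN a + s *: dir S a + u *: dir D a.
  by rewrite traj_perturb mulmx_pert !mulmxDl -!scalemxAl /QN (traj_N_split _ _ k).
rewrite /perturbed_cost /Vhat (eq_bigr _ (fun l _ => cost l)).
rewrite big_split /= -big_mkcond big_pred1_eq.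
rewrite (eq_bigr _ (fun a _ => congr1 phi (term a))) sumrB; ring.
Qed.

Hypotheses (dphi : forall x v, derivable phi x v) (cphi : forall v, continuous ('D_v phi)).

Lemma perturbed_cost_linear_approx S D (e : R) : 0 < e ->
  exists2 d : R, 0 < d & forall s u : R, `|s| < d -> `|u| < d ->
  `|perturbed_cost S D s u - Vhat Lam phi Q0 U - s * first_variation S
    - u * first_variation D| <= e * (`|s| + `|u|).
Proof.
move=> e0; set e' := e / M.+1%:R.
have e'0 : 0 < e' by rewrite divr_gt0.
set err := fun a s u => phi (QN a + s *: dir S a + u *: dir D a) - phi (QN a)
   - s * 'D_(dir S a) phi (QN a) - u * 'D_(dir D a) phi (QN a).
have [d d0 hd] := @finite_common_delta R _ (fun a d => forall s u : R,
    `|s| < d -> `|u| < d -> `|err a s u| <= e' * (`|s| + `|u|))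
  (fun a d d' _ le_d' H s u hs hu => H s u (lt_le_trans hs le_d') (lt_le_trans hu le_d'))
  (fun a => linear_approx2 dphi (@cphi _ _) (@cphi _ _) e'0).
exists d => // s u hs hu.
suff -> : perturbed_cost S D s u - Vhat Lam phi Q0 U - s * first_variation S
          - u * first_variation D = \sum_a err a s u.
  apply: (le_trans (ler_norm_sum _ _ _)).
  apply: (le_trans (ler_sum _ (fun a _ => hd a s u hs hu))).
  rewrite sumr_const card_ord -mulr_natr mulrAC ler_wpM2r ?addr_ge0 //.
  by rewrite /e' mulrAC ler_pdivrMr ?ltr0Sn // ler_wpM2l ?(ltW e0) // ler_nat.
rewrite (perturbed_costE S D s u) /first_variation /err !sumrB !mulrDr !mulr_sumr; ring.
Qed.


Definition variation_mx : 'M[R]_n :=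
  Lam *m U k + \sum_a (costate (grad phi (QN a)) U k.+1)^T *m traj (Q0 a) U k.+1.

Lemma first_variationE S : first_variation S = \tr (variation_mx *m S).
Proof.
rewrite /first_variation /variation_mx mulmxDl mxtraceD -mulmxA; congr (_ + _).
rewrite mulmx_suml raddf_sum; apply: eq_bigr => a _.
rewrite (derive_dir_grad dphi cphi) /dir /costate trmx_mul trmxK.
by rewrite !mulmxA mxtrace_mulC !mulmxA.
Qed.

Lemma local_min_first_variation_ge0 (i j : 'I_n) :
  local_min_SO Lam phi Q0 U -> i != j -> 0 <= first_variation (plane_skew i j).
Proof.
move=> [U_SO [eps eps0 Umin]] neq_ij.
set S : 'M[R]_n := plane_skew i j; set D : 'M[R]_n := plane_proj i j.
set K := `|U k *m S| + `|U k *m D|.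
have K1 : 0 < 2 * K + 1 by rewrite ltr_wpDl // mulr_ge0 // addr_ge0.
set t0 := Num.min 1 (eps / (2 * K + 1)).
have t00 : 0 < t0 by rewrite lt_min ltr01 divr_gt0.
apply: (linear_approx_min_coef_ge0 t00 (perturbed_cost_linear_approx S D)) => a a0 at0.
have a1 : a < 1 by apply: lt_le_trans at0 _; rewrite ge_min lexx.
have aK : a * (2 * K + 1) < eps by rewrite -ltr_pdivlMr // (lt_le_trans at0) // ge_min lexx orbT.
set s := 2 * a * Num.sqrt (1 - a ^+ 2); set u := - (2 * a ^+ 2).
have a2_ge0 : 0 <= 2 * a by rewrite mulr_ge0 // ltW.
have sq_ge0 := sqrtr_ge0 (1 - a ^+ 2).
have sq_le1 : Num.sqrt (1 - a ^+ 2) <= 1.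
  by rewrite -[X in _ <= X]sqrtr1 ler_sqrt // lerBlDr lerDl sqr_ge0.
have s_le : `|s| <= 2 * a by rewrite ger0_norm ?ler_piMr // mulr_ge0.
have u_le : `|u| <= 2 * a.
  rewrite /u normrN ger0_norm ?mulr_ge0 ?exprn_ge0 ?(ltW a0) //.
  by rewrite expr2 mulrA ler_piMr // ltW.
apply: Umin => [l|l].
- rewrite /perturb_ctrl; case: eqP => _; last exact: U_SO.
  by apply: SOmx_mul (U_SO k) (plane_mx_SO neq_ij _); rewrite ger0_norm ltW.
- rewrite /perturb_ctrl; case: eqP => [->|_]; last by rewrite subrr normr0.
  rewrite !mulmxDr mulmx1 -!scalemxAr addrAC [U k + _]addrC addrK -/s -/u.
  apply: (le_lt_trans (ler_normD _ _)); rewrite [`|s *: _|]normrZ [`|u *: _|]normrZ.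
  have := ler_wpM2r (normr_ge0 (U k *m S)) s_le.
  have := ler_wpM2r (normr_ge0 (U k *m D)) u_le.
  rewrite /K in aK; lra.
Qed.

End FirstVariation.

Lemma sym_variation_balance (R : comPzRingType) n (L U Z : 'M[R]_n) :
  L^T = L -> U *m U^T = 1%:M ->
  (L *m U + U^T *m Z *m U)^T = L *m U + U^T *m Z *m U ->
  U *m L - L *m U^T = Z^T - Z.
Proof.
move=> LT UUT /(congr1 (fun X => U *m X *m U^T)).
rewrite !raddfD /= !trmx_mul !trmxK LT !mulmxDl !mulmxA UUT mul1mx.
rewrite -!(mulmxA _ U) UUT !mulmx1 !mul1mx => E.
by apply/eqP; rewrite subr_eq addrAC [Z^T + _]addrC E addrK.
Qed.

Unset Implicit Arguments. Set Strict Implicit.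

Theorem theorem2p6 (R : realType) (n N M : nat)
  (hn : (2 <= n)%N) (hN : (1 <= N)%N) (hM : (1 <= M)%N)
  (Lam : 'M[R]_n) (hLdiag : is_diag_mx Lam) (hLpos : forall i, 0 < Lam i i)
  (Q0 : 'I_M -> 'M[R]_n) (hQ0 : forall a, Q0 a \in SOmx R n)
  (phi : 'M[R]_n -> R) (hphi0 : forall A, 0 <= phi A) (hphi : smooth_fun phi)
  (U : 'I_N -> 'M[R]_n) (hmin : local_min_SO Lam phi Q0 U) :
  exists P : 'I_M -> nat -> 'M[R]_n,
    (forall (a : 'I_M) (k : 'I_N),
        traj (Q0 a) U k.+1 = traj (Q0 a) U k *m U k /\
        P a k.+1 = P a k *m U k) /\
    (forall k : 'I_N,
        U k *m Lam - Lam *m (U k)^T =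
        \sum_(a < M) ((traj (Q0 a) U k)^T *m P a k - (P a k)^T *m traj (Q0 a) U k)) /\
    (forall a : 'I_M, P a N = grad phi (traj (Q0 a) U N)).
Proof.
have dphi x v : derivable phi x v := (hphi [::]).2 v x.
have cphi v : continuous ('D_v phi) := (hphi [:: v]).1.
have orthU k : (U k)^T *m U k = 1%:M by have := hmin.1 k; rewrite inE => /andP[/eqP].
have LamT : Lam^T = Lam by case/diag_mxP: hLdiag => d ->; rewrite tr_diag_mx.
pose P a := costate (grad phi (traj (Q0 a) U N)) U.
exists P; split; [|split]; last by move=> a; rewrite /P costate_N.
  by move=> a k; rewrite /P traj_ordS costate_ordS.
move=> k; set Z := \sum_a (P a k)^T *m traj (Q0 a) U k.
have var_sym : (variation_mx Lam Q0 phi U k)^T = variation_mx Lam Q0 phi U k.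
  apply: sym_of_mxtrace_plane_skew_ge0 => i j neq_ij.
  by rewrite -first_variationE //; exact: local_min_first_variation_ge0.
have var_conj : variation_mx Lam Q0 phi U k = Lam *m U k + (U k)^T *m Z *m U k.
  rewrite /variation_mx mulmx_sumr mulmx_suml; congr (_ + _); apply: eq_bigr => a _.
  by rewrite costate_ordS // traj_ordS trmx_mul !mulmxA.
rewrite var_conj in var_sym.
rewrite sumrB (sym_variation_balance LamT (mulmx1C (orthU k)) var_sym).
by rewrite /Z raddf_sum; congr (_ - _); apply: eq_bigr => a _; rewrite /= trmx_mul trmxK.
Qed.
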